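(* Let $(G,k)$ be an instance of \textsc{Paw-free Edge Editing} with $k>0$ such that there is no independent set of $k+3$ vertices of $G$ all having the same neighborhood. Let $S$ be the set of vertices covered by a maximal (under inclusion) collection of pairwise edge-disjoint induced paws in $G$. Let $s_1,s_2$ be two adjacent vertices of $G$. If there are more than $4k+6$ vertices that belong to triangle-free connected components of $G-S$ and are adjacent to both $s_1$ and $s_2$, then either $(G,k)$ is a no-instance, or every solution $A$ of $(G,k)$ contains the pair $s_1s_2$.
   Context: The paw is the graph on four vertices $x_1,x_2,x_3,x_4$ with edges $x_1x_2,x_2x_3,x_1x_3,x_3x_4$; a graph is paw-free if it has no induced paw. For a set $A$ of unordered vertex pairs, $G\Delta A$ is the graph on $V(G)$ with edge set the symmetric difference of $E(G)$ and $A$. An instance $(G,k)$ of \textsc{Paw-free Edge Editing} asks whether some set $A$ of at most $k$ vertex pairs makes $G\Delta A$ paw-free; such an $A$ is a solution. Neighborhoods are open neighborhoods $N(v)$. *)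

(* A simple graph on a finite vertex type T is a symmetric,
   irreflexive boolean relation e : rel T. Unordered vertex pairs are
   2-element sets {set T}. *)
From mathcomp Require Import all_boot.
Set Implicit Arguments.
Unset Strict Implicit.
Unset Printing Implicit Defensive.

Section PawDefs.
Variable T : finType.

Definition simple_graph (e : rel T) : Prop := symmetric e /\ irreflexive e.

Definition nbh (e : rel T) (v : T) : {set T} := [set w | e v w].

Definition vpair (p : {set T}) : bool := #|p| == 2.

Definition edit (e : rel T) (A : {set {set T}}) : rel T :=
  fun x y => (x != y) && (e x y (+) ([set x; y] \in A)).

Definition paw4 := (T * T * T * T)%type.

Definition is_induced_paw (e : rel T) (p : paw4) : bool :=
  let: (x1, x2, x3, x4) := p in
  [&& uniq [:: x1; x2; x3; x4],
      e x1 x2, e x2 x3, e x1 x3, e x3 x4, ~~ e x1 x4 & ~~ e x2 x4].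

Definition paw_free (e : rel T) : Prop := forall p : paw4, ~~ is_induced_paw e p.

Definition paw_edges (p : paw4) : {set {set T}} :=
  let: (x1, x2, x3, x4) := p in
  [set [set x1; x2]; [set x2; x3]; [set x1; x3]; [set x3; x4]].

Definition paw_vertices (p : paw4) : {set T} :=
  let: (x1, x2, x3, x4) := p in [set x1; x2; x3; x4].

Definition is_solution (e : rel T) (k : nat) (A : {set {set T}}) : Prop :=
  [/\ {in A, forall p, vpair p}, #|A| <= k & paw_free (edit e A)].

Definition edge_disjoint_paws (e : rel T) (P : {set paw4}) : Prop :=
  {in P, forall p, is_induced_paw e p} /\
  {in P &, forall p q, p != q -> [disjoint paw_edges p & paw_edges q]}.

Definition maximal_edge_disjoint_paws (e : rel T) (P : {set paw4}) : Prop :=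
  edge_disjoint_paws e P /\
  forall P' : {set paw4}, P \subset P' -> edge_disjoint_paws e P' -> P' = P.

Definition covered (P : {set paw4}) : {set T} := \bigcup_(p in P) paw_vertices p.

Definition del_rel (e : rel T) (S : {set T}) : rel T :=
  fun x y => [&& e x y, x \notin S & y \notin S].

Definition component (e : rel T) (S : {set T}) (v : T) : {set T} :=
  [set w | (w \notin S) && connect (del_rel e S) v w].

Definition triangle_free_on (e : rel T) (C : {set T}) : Prop :=
  forall x y z, x \in C -> y \in C -> z \in C -> ~ [&& e x y, e y z & e x z].

Definition in_tf_component (e : rel T) (S : {set T}) (v : T) : Prop :=
  v \notin S /\ triangle_free_on e (component e S v).

Definition independent (e : rel T) (I : {set T}) : Prop :=
  {in I &, forall x y, ~~ e x y}.

End PawDefs.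

(** Suppose a solution [A] avoids the pair [s1s2], and let [X'] be the common
    neighbours of [s1] and [s2] in triangle-free components of [G - S] that no
    pair of [A] touches; at least [|X| - 2k > 2k + 4] of them remain.  In the
    paw-free graph [G Δ A] the edge [s1s2] survives and the vertices of [X']
    keep their neighbourhoods, so two non-adjacent vertices of [X'] must have
    the same neighbourhood, otherwise they span a paw with [s1], [s2] and a
    private neighbour.  Hence the non-neighbours of any [x] in [X'] form an
    independent set of twins, of size at most [k + 2].  Since [|X'| > 2(k + 2)],
    some [x], a neighbour [y] and a common neighbour [z] form a triangle
    inside a triangle-free component: a contradiction. *)
From mathcomp Require Import all_boot.
From mathcomp Require Import zify.

Set Implicit Arguments.
Unset Strict Implicit.
Unset Printing Implicit Defensive.

Section PawFree.
Variables (T : finType) (f : rel T).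
Hypotheses (fsym : symmetric f) (firr : irreflexive f).

Lemma rel_neq x y : f x y -> x != y.
Proof. by apply: contraTneq => ->; rewrite firr. Qed.

(* In a simple graph the distinctness of the four vertices of a paw is implied
   by its edges and non-edges. *)
Lemma paw_free_pendant x1 x2 x3 x4 : paw_free f ->
  f x1 x2 -> f x2 x3 -> f x1 x3 -> f x3 x4 -> f x1 x4 || f x2 x4.
Proof.
move=> pf f12 f23 f13 f34; apply: contraT => /norP[n14 n24].
have n14' : x1 != x4 by apply: contraNneq n24 => <-; rewrite fsym.
have n24' : x2 != x4 by apply: contraNneq n14 => <-.
move: (pf (x1, x2, x3, x4)); rewrite /is_induced_paw /= !inE.
by rewrite f12 f23 f13 f34 n14 n24 !(negbTE (rel_neq f12), negbTE (rel_neq f13),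
  negbTE (rel_neq f23), negbTE (rel_neq f34)) (negbTE n14') (negbTE n24').
Qed.

Lemma paw_free_nbh_sub s1 s2 x y w : paw_free f -> f s1 s2 ->
  f s1 x -> f s2 x -> f s1 y -> f s2 y -> ~~ f x y -> f x w -> f y w.
Proof.
move=> pf f12 f1x f2x f1y f2y nxy fxw; apply/negPn/negP => nyw.
have nwy : ~~ f w y by rewrite fsym.
have fwx : f w x by rewrite fsym.
have [fw1|nw1] := boolP (f w s1).
  have := paw_free_pendant pf fwx (_ : f x s1) fw1 f1y.
  by rewrite fsym f1x (negbTE nwy) (negbTE nxy) => /(_ isT).
have [fw2|nw2] := boolP (f w s2).
  have := paw_free_pendant pf fwx (_ : f x s2) fw2 f2y.
  by rewrite fsym f2x (negbTE nwy) (negbTE nxy) => /(_ isT).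
have := paw_free_pendant pf f12 f2x f1x fxw.
by rewrite fsym (negbTE nw1) fsym (negbTE nw2).
Qed.

Lemma paw_free_nonadj_nbh s1 s2 x y : paw_free f -> f s1 s2 ->
  f s1 x -> f s2 x -> f s1 y -> f s2 y -> ~~ f x y -> nbh f x = nbh f y.
Proof.
move=> pf f12 f1x f2x f1y f2y nxy; apply/setP => w; rewrite !inE.
apply/idP/idP; first exact: paw_free_nbh_sub pf f12 f1x f2x f1y f2y nxy.
by apply: paw_free_nbh_sub pf f12 f1y f2y f1x f2x _; rewrite fsym.
Qed.

End PawFree.

Section Edit.
Variables (T : finType) (e : rel T) (A : {set {set T}}).
Hypothesis eirr : irreflexive e.

Lemma edit_symmetric : symmetric e -> symmetric (edit e A).
Proof. by move=> esym x y; rewrite /edit eq_sym setUC esym. Qed.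

Lemma edit_irreflexive : irreflexive (edit e A).
Proof. by move=> x; rewrite /edit eqxx. Qed.

Lemma edit_notin_cover x y : x \notin cover A -> edit e A x y = e x y.
Proof.
move=> xA; rewrite /edit.
have -> : ([set x; y] \in A) = false.
  apply: contraNF xA => xyA.
  by apply/bigcupP; exists [set x; y]; rewrite ?set21.
by rewrite addbF; case: eqP => // ->; rewrite eirr.
Qed.

Lemma nbh_edit_notin_cover x : x \notin cover A -> nbh (edit e A) x = nbh e x.
Proof. by move=> xA; apply/setP => y; rewrite !inE edit_notin_cover. Qed.

Lemma edit_pair_notin x y : e x y -> [set x; y] \notin A -> edit e A x y.
Proof.
by move=> exy /negbTE xyA; rewrite /edit xyA addbF exy (rel_neq eirr exy).
Qed.

End Edit.

Lemma card_cover_pairs (T : finType) (A : {set {set T}}) :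
  {in A, forall p, vpair p} -> #|cover A| <= 2 * #|A|.
Proof.
move=> Apair; apply: leq_trans (leq_card_cover A).1 _.
by rewrite mulnC -sum_nat_const; apply: leq_sum => p /Apair /eqP ->.
Qed.

Section TwinClasses.
Variables (T : finType) (e : rel T) (X : {set T}).
Hypothesis twinX :
  {in X &, forall x y, ~~ e x y -> nbh e x = nbh e y}.

Definition nonnbh_in x := [set y in X | ~~ e x y].

Lemma nonnbh_in_twins x : x \in X ->
  independent e (nonnbh_in x) /\
  {in nonnbh_in x &, forall u v, nbh e u = nbh e v}.
Proof.
move=> xX; split=> u v; rewrite !inE => /andP[uX nxu] /andP[vX nxv].
  have : v \notin nbh e x by rewrite inE.
  by rewrite (twinX xX uX nxu) inE.
by rewrite -(twinX xX uX nxu) (twinX xX vX nxv).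
Qed.

Lemma card_nonnbh_in n x : x \in X ->
  ~ (exists I : {set T}, [/\ #|I| = n, independent e I &
                            {in I &, forall u v, nbh e u = nbh e v}]) ->
  #|nonnbh_in x| < n.
Proof.
move=> xX noI; rewrite ltnNge; apply/negP => /card_geqP[s [suniq ssize sI]].
have [indep twins] := nonnbh_in_twins xX.
apply: noI; exists [set y in s]; split.
- by rewrite cardsE (card_uniqP suniq).
- by move=> u v; rewrite !inE => /sI uI /sI vI; apply: indep.
- by move=> u v; rewrite !inE => /sI uI /sI vI; apply: twins.
Qed.

End TwinClasses.

Lemma triangle_of_few_nonnbh (T : finType) (e : rel T) (X : {set T}) m :
  {in X, forall x, #|nonnbh_in e X x| <= m} -> 2 * m < #|X| ->
  exists x y z, [/\ x \in X, y \in X, z \in X & [&& e x y, e y z & e x z]].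
Proof.
move=> few bigX.
have [x xX] : {x | x \in X} by apply/sigW/set0Pn; rewrite -card_gt0; lia.
have [y /setDP[yX nxy]] : exists y, y \in X :\: nonnbh_in e X x.
  apply/set0Pn; rewrite setD_eq0; apply: contraTN isT => /subset_leq_card.
  by have := few x xX; lia.
have exy : e x y by move: nxy; rewrite inE yX negbK.
have [z /setDP[zX]] :
    exists z, z \in X :\: (nonnbh_in e X x :|: nonnbh_in e X y).
  apply/set0Pn; rewrite setD_eq0; apply: contraTN isT => /subset_leq_card.
  have := (leq_card_setU (nonnbh_in e X x) (nonnbh_in e X y)).1.
  by have := few x xX; have := few y yX; lia.
rewrite !inE zX /= => /norP[/negPn exz /negPn eyz].
by exists x, y, z; rewrite xX yX zX exy eyz exz.
Qed.

Lemma tf_component_triangle (T : finType) (e : rel T) S x y z :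
  in_tf_component e S x -> y \notin S -> z \notin S ->
  e x y -> e y z -> e x z -> False.
Proof.
move=> [xS tfx] yS zS exy eyz exz; apply: (tfx x y z); last by rewrite exy eyz.
- by rewrite inE xS connect0.
- by rewrite inE yS connect1 //= /del_rel exy xS.
- by rewrite inE zS connect1 //= /del_rel exz xS.
Qed.

Theorem lemma1 (T : finType) (e : rel T) (k : nat)
  (He : simple_graph e) (Hk : 0 < k)
  (Htwins : ~ exists I : {set T},
      [/\ #|I| = k + 3, independent e I &
          {in I &, forall u v, nbh e u = nbh e v}])
  (P : {set paw4 T}) (HP : maximal_edge_disjoint_paws e P)
  (s1 s2 : T) (Hs : e s1 s2)
  (Hmany : exists X : {set T},
      4 * k + 6 < #|X| /\
      forall v, v \in X ->
        [/\ in_tf_component e (covered P) v, e s1 v & e s2 v]) :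
  (forall A : {set {set T}}, ~ is_solution e k A) \/
  (forall A : {set {set T}}, is_solution e k A -> [set s1; s2] \in A).
Proof.
have [esym eirr] := He.
right=> A [Apair cardA pfA]; apply: contraT => s12A.
have [X [bigX HX]] := Hmany.
set f := edit e A; have fsym : symmetric f := edit_symmetric A esym.
have fEs s x : x \notin cover A -> f s x = e s x.
  by move=> xA; rewrite fsym /f edit_notin_cover // esym.
set X' := X :\: cover A.
have X'X x : x \in X' -> x \in X by case/setDP.
have twinX' : {in X' &, forall x y, ~~ e x y -> nbh e x = nbh e y}.
  move=> x y /setDP[xX xA] /setDP[yX yA] nxy.
  have [_ e1x e2x] := HX x xX; have [_ e1y e2y] := HX y yX.
  rewrite -!(nbh_edit_notin_cover (A := A) eirr) //.
  apply: (paw_free_nonadj_nbh fsym (edit_irreflexive e A) pfA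
           (edit_pair_notin eirr Hs s12A)); by rewrite fEs.
have few : {in X', forall x, #|nonnbh_in e X' x| <= k + 2}.
  by move=> x xX'; have := card_nonnbh_in twinX' xX' Htwins; rewrite addnS.
have bigX' : 2 * (k + 2) < #|X'|.
  have := card_cover_pairs Apair; rewrite cardsD.
  by have := subset_leq_card (subsetIr X (cover A)); lia.
have [x [y [z [xX' yX' zX' /and3P[exy eyz exz]]]]] :=
  triangle_of_few_nonnbh few bigX'.
have [tfx _ _] := HX x (X'X x xX').
have [[yS _] _ _] := HX y (X'X y yX'); have [[zS _] _ _] := HX z (X'X z zX').
by case: (tf_component_triangle tfx yS zS exy eyz exz).
Qed.
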